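(* Let $\mathcal{F}$ be a class of simple graphs and consider the assertions: (1) $\mathcal{F}$ is closed under taking induced subgraphs; (2) $\equiv_{\mathcal{F}}$ is preserved under left lexicographic products, i.e.\ for all simple graphs $G,H,H'$, if $H\equiv_{\mathcal{F}}H'$ then $G\cdot H\equiv_{\mathcal{F}}G\cdot H'$; (3) $\mathrm{cl}(\mathcal{F})$ is closed under taking induced subgraphs. Then (1) implies (2), and (2) and (3) are equivalent.
   Context: All graphs are finite, undirected, without multiple edges; simple means without loops. $\hom(F,G)$ counts homomorphisms $F\to G$; $G\equiv_{\mathcal{F}}H$ means $\hom(F,G)=\hom(F,H)$ for all $F\in\mathcal{F}$; $\mathrm{cl}(\mathcal{F})$ is the class of all simple graphs $K$ such that for all simple $G,H$, $G\equiv_{\mathcal{F}}H$ implies $\hom(K,G)=\hom(K,H)$. The lexicographic product $G\cdot H$ has vertex set $V(G)\times V(H)$, with $(g,h)$ adjacent to $(g',h')$ iff either $g=g'$ and $hh'\in E(H)$, or $gg'\in E(G)$. *)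

From mathcomp Require Import all_boot.
Set Implicit Arguments. Unset Strict Implicit. Unset Printing Implicit Defensive.

Record sgraph := SGraph {
  vert :> finType;
  adj : rel vert;
  adj_sym : symmetric adj;
  adj_irr : irreflexive adj }.

Definition hom (F G : sgraph) : nat :=
  #|[set f : {ffun F -> G} | [forall x : F, forall y : F, adj x y ==> adj (f x) (f y)]]|.

Definition hom_equiv (C : sgraph -> Prop) (G H : sgraph) : Prop :=
  forall F, C F -> hom F G = hom F H.

Definition cl (C : sgraph -> Prop) (K : sgraph) : Prop :=
  forall G H : sgraph, hom_equiv C G H -> hom K G = hom K H.

Definition iso (G H : sgraph) : Prop :=
  exists f : G -> H, bijective f /\ forall x y : G, adj (f x) (f y) = adj x y.

Section Induced.
Variables (G : sgraph) (S : {set G}).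
Definition ind_vert : finType := {x : G | x \in S}.
Definition ind_adj : rel ind_vert := fun x y => adj (val x) (val y).
Lemma ind_adj_sym : symmetric ind_adj.
Proof. by move=> x y; rewrite /ind_adj adj_sym. Qed.
Lemma ind_adj_irr : irreflexive ind_adj.
Proof. by move=> x; rewrite /ind_adj adj_irr. Qed.
Definition induced : sgraph := SGraph ind_adj_sym ind_adj_irr.
End Induced.

Definition induced_closed (C : sgraph -> Prop) : Prop :=
  forall F : sgraph, C F -> forall (S : {set F}) (K : sgraph), iso K (induced S) -> C K.

Section Lex.
Variables (G H : sgraph).
Definition lex_adj : rel (G * H)%type :=
  fun u v => ((u.1 == v.1) && adj u.2 v.2) || adj u.1 v.1.
Lemma lex_adj_sym : symmetric lex_adj.
Proof. by move=> [g h] [g' h']; rewrite /lex_adj /= eq_sym adj_sym (adj_sym g). Qed.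
Lemma lex_adj_irr : irreflexive lex_adj.
Proof. by move=> [g h]; rewrite /lex_adj /= !adj_irr andbF. Qed.
Definition lexprod : sgraph := SGraph lex_adj_sym lex_adj_irr.
End Lex.

Definition lex_preserved (C : sgraph -> Prop) : Prop :=
  forall G H H' : sgraph, hom_equiv C H H' -> hom_equiv C (lexprod G H) (lexprod G H').

From mathcomp Require Import all_boot zify.
Set Implicit Arguments. Unset Strict Implicit. Unset Printing Implicit Defensive.

(* A homomorphism F -> G.Y is a pair (phi, psi) where phi : F -> G maps each
   edge to an edge or collapses it, and psi : F -> Y only has to preserve the
   edges inside the fibres of phi. Counting the psi fibre by fibre shows that
   hom(F, G.Y) depends on Y only through the numbers hom(F[T], Y), which gives
   (1) => (2) and (3) => (2).
   Conversely, let K be in cl(C), G =_C H, and n_Y(phi) the number of psi for Y.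
   With the complete graph on V(K) on the left every phi : V(K) -> V(K) is
   allowed, and n is multiplicative for the categorical product, so (2) applied
   to G x X =_C H x X gives sum_phi n_G(phi) n_X(phi) = sum_phi n_H(phi) n_X(phi)
   for every X; X = G and X = H force n_G = n_H. For phi collapsing S to a point
   and injective elsewhere, n_Y(phi) = hom(K[S], Y) |Y|^(|K| - |S|). *)

Section FfunBijections.
Variables (V W : finType).

Definition ffun_res (S : {set V}) (f : {ffun V -> W}) : {ffun {x | x \in S} -> W} :=
  [ffun u => f (val u)].

Variable T : {set V}.

Definition ffun_glue (p : {ffun {x | x \in T} -> W})
    (q : {ffun {x | x \in ~: T} -> W}) : {ffun V -> W} :=
  [ffun x => (if x \in T as b return (x \in T) = b -> W
              then fun xT => p (exist _ x xT)
              else fun xT => q (exist _ x (etrans (in_setC x T) (negbT xT))))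
             (erefl _)].

Lemma ffun_split_bij :
  bijective (fun f : {ffun V -> W} => (ffun_res T f, ffun_res (~: T) f)).
Proof.
exists (fun pq => ffun_glue pq.1 pq.2) => [f | [p q]].
  apply/ffunP => x; rewrite !ffunE.
  by move: (erefl (x \in T)); case: {2 3}(x \in T) => xT; rewrite ffunE.
congr pair; apply/ffunP => -[x xS]; rewrite !ffunE /=;
  move: (erefl (x \in T)); case: {2 3}(x \in T) => xT.
- by congr (p _); apply: val_inj.
- by exfalso; move: xS; rewrite xT.
- by exfalso; move: xS; rewrite inE xT.
- by congr (q _); apply: val_inj.
Qed.

Lemma card_ffun_split (P : pred {ffun {x | x \in T} -> W})
    (Q : pred {ffun {x | x \in ~: T} -> W}) :
  #|[set f : {ffun V -> W} | P (ffun_res T f) && Q (ffun_res (~: T) f)]| =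
  #|[set p | P p]| * #|[set q | Q q]|.
Proof.
rewrite -cardsX -(on_card_preimset (onW_bij _ ffun_split_bij)).
by apply: eq_card => f; rewrite !inE.
Qed.

End FfunBijections.

Section FfunPairs.
Variables (V A B : finType).

Definition unzip_ffun (f : {ffun V -> A * B}) : {ffun V -> A} * {ffun V -> B} :=
  ([ffun x => (f x).1], [ffun x => (f x).2]).

Lemma unzip_ffun_bij : bijective unzip_ffun.
Proof.
exists (fun pq : {ffun V -> A} * {ffun V -> B} =>
  [ffun x => (pq.1 x, pq.2 x)] : {ffun V -> A * B}) => [f | [p q]].
  by apply/ffunP => x; rewrite !ffunE; case: (f x).
by congr pair; apply/ffunP => x; rewrite !ffunE.
Qed.

Lemma card_ffun_pair (P : pred ({ffun V -> A} * {ffun V -> B})) :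
  #|[set f | P (unzip_ffun f)]| = #|[set pq | P pq]|.
Proof.
rewrite -(on_card_preimset (onW_bij _ unzip_ffun_bij)).
by apply: eq_card => f; rewrite !inE.
Qed.

End FfunPairs.

Lemma card_dep_pairs (A B : finType) (P : pred A) (Q : A -> pred B) :
  #|[set ab : A * B | P ab.1 && Q ab.1 ab.2]| = \sum_(a | P a) #|[set b | Q a b]|.
Proof.
rewrite -sum1dep_card -(pair_big_dep P Q (fun _ _ => 1)) /=.
by apply: eq_bigr => a _; rewrite sum1dep_card.
Qed.

Definition preserves (V : finType) (Y : sgraph) (R : rel V) (f : V -> Y) : bool :=
  [forall x, forall y, R x y ==> adj (f x) (f y)].

Definition hom_rel (V : finType) (R : rel V) (Y : sgraph) : nat :=
  #|[set f : {ffun V -> Y} | preserves R f]|.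

Definition restr_rel (V : finType) (S : {set V}) (R : rel V) : rel {x | x \in S} :=
  fun u v => R (val u) (val v).
Arguments restr_rel {V} S R.

Section RelationHoms.
Variable V : finType.

Lemma eq_hom_rel Y (R1 R2 : rel V) : R1 =2 R2 -> hom_rel R1 Y = hom_rel R2 Y.
Proof.
move=> eqR; apply: eq_card => f; rewrite !inE.
by apply: eq_forallb => x; apply: eq_forallb => y; rewrite eqR.
Qed.

Lemma hom_rel_le (R : rel V) Y : hom_rel R Y <= #|Y| ^ #|V|.
Proof. by rewrite -card_ffun max_card. Qed.

Lemma hom_rel0 Y : hom_rel (fun _ _ : V => false) Y = #|Y| ^ #|V|.
Proof.
rewrite -card_ffun; apply: eq_card => f; rewrite !inE.
by apply/forallP => x; apply/forallP.
Qed.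

Lemma hom_rel_split (T : {set V}) (R : rel V) Y :
    (forall x y, R x y -> (x \in T) = (y \in T)) ->
  hom_rel R Y = hom_rel (restr_rel T R) Y * hom_rel (restr_rel (~: T) R) Y.
Proof.
move=> RT; rewrite /hom_rel -card_ffun_split; apply: eq_card => f; rewrite !inE.
apply/idP/andP => [/forallP Rf | [/forallP RfT /forallP RfC]].
  by split; apply/forallP => u; apply/forallP => v;
    rewrite !ffunE; apply: (forallP (Rf _)).
apply/forallP => x; apply/forallP => y; apply/implyP => Rxy.
case: (boolP (x \in T)) => xT.
  have yT : y \in T by rewrite -(RT _ _ Rxy).
  have /forallP/(_ (exist _ y yT))/implyP := RfT (exist _ x xT).
  by rewrite !ffunE; apply.
have xC : x \in ~: T by rewrite inE.
have yC : y \in ~: T by rewrite inE -(RT _ _ Rxy).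
have /forallP/(_ (exist _ y yC))/implyP := RfC (exist _ x xC).
by rewrite !ffunE; apply.
Qed.

Lemma hom_rel_eq0 (R : rel V) (Y : sgraph) : #|Y| ^ #|V| = 0 -> hom_rel R Y = 0.
Proof. by move=> Y0; apply/eqP; rewrite -leqn0 -Y0 hom_rel_le. Qed.

Lemma hom_rel_card0 (R : rel V) Y : #|V| = 0 -> hom_rel R Y = 1.
Proof.
move=> V0; have R0 : R =2 (fun _ _ => false) by move=> x; have := card0_eq V0 x.
by rewrite (eq_hom_rel Y R0) hom_rel0 V0.
Qed.

End RelationHoms.

Section DisjointUnion.
Variable V : finType.

Lemma hom_rel_relU (T : {set V}) (R1 R2 : rel V) Y :
    (forall x y, R1 x y -> (x \in T) && (y \in T)) ->
    (forall x y, R2 x y -> (x \notin T) && (y \notin T)) ->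
  hom_rel (relU R1 R2) Y * #|Y| ^ #|V| = hom_rel R1 Y * hom_rel R2 Y.
Proof.
move=> R1T R2C.
have R1x x y : R1 x y -> (x \in T) = (y \in T) by move/R1T/andP=> [-> ->].
have R2x x y : R2 x y -> (x \in T) = (y \in T).
  by move/R2C/andP=> [/negbTE-> /negbTE->].
have RUx x y : relU R1 R2 x y -> (x \in T) = (y \in T).
  by case/orP=> [/R1x | /R2x].
rewrite !(hom_rel_split (T := T)) // -(cardsC T) expnD.
have R2_T : restr_rel T R2 =2 (fun _ _ => false).
  by move=> [x xT] [y yT]; rewrite /restr_rel /=; apply: contraTF xT => /R2C/andP[].
have R1_C : restr_rel (~: T) R1 =2 (fun _ _ => false).
  move=> [x xC] [y yC]; rewrite /restr_rel /=; apply: contraTF xC => /R1T/andP[xT _].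
  by rewrite inE xT.
have RU_T : restr_rel T (relU R1 R2) =2 restr_rel T R1.
  by move=> u v; move: (R2_T u v); rewrite /restr_rel /= => ->; rewrite orbF.
have RU_C : restr_rel (~: T) (relU R1 R2) =2 restr_rel (~: T) R2.
  by move=> u v; move: (R1_C u v); rewrite /restr_rel /= => ->.
rewrite (eq_hom_rel Y RU_T) (eq_hom_rel Y RU_C) (eq_hom_rel Y R2_T).
rewrite (eq_hom_rel Y R1_C) !hom_rel0.
by rewrite !card_sig mulnACA [RHS]mulnACA [_ * hom_rel _ _]mulnC.
Qed.

Lemma hom_rel_relU_eq (T : {set V}) (R1 R2 : rel V) (H H' : sgraph) :
    (forall x y, R1 x y -> (x \in T) && (y \in T)) ->
    (forall x y, R2 x y -> (x \notin T) && (y \notin T)) ->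
    #|H| = #|H'| -> hom_rel R1 H = hom_rel R1 H' -> hom_rel R2 H = hom_rel R2 H' ->
  hom_rel (relU R1 R2) H = hom_rel (relU R1 R2) H'.
Proof.
move=> R1T R2C eqHH' eq1 eq2.
have [N0 | Npos] := posnP (#|H'| ^ #|V|).
  by rewrite !hom_rel_eq0 ?eqHH'.
apply/eqP; rewrite -(eqn_pmul2r Npos) -{1}eqHH'.
by rewrite !(hom_rel_relU (T := T)) // eq1 eq2.
Qed.

End DisjointUnion.

Lemma hom_rel_adj (F Y : sgraph) : hom_rel (@adj F) Y = hom F Y.
Proof. by []. Qed.

Definition adj_on (F : sgraph) (T : {set F}) : rel F :=
  fun x y => [&& adj x y, x \in T & y \in T].

Definition fiber_adj (F : sgraph) (A : eqType) (phi : F -> A) : rel F :=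
  fun x y => adj x y && (phi x == phi y).

Section InducedSubgraphs.
Variable F : sgraph.

Lemma hom_rel_adj_on (T : {set F}) (Y : sgraph) :
  hom_rel (adj_on T) Y = hom (induced T) Y * #|Y| ^ #|~: T|.
Proof.
rewrite (hom_rel_split (T := T)); last by move=> x y /and3P[_ -> ->].
congr (_ * _).
  have adj_onT : restr_rel T (adj_on T) =2 @ind_adj F T.
    by move=> [x xT] [y yT]; rewrite /restr_rel /adj_on /ind_adj /= xT yT !andbT.
  by rewrite (eq_hom_rel Y adj_onT).
have adj_onC : restr_rel (~: T) (adj_on T) =2 (fun _ _ => false).
  move=> [x xC] [y yC]; rewrite /restr_rel /adj_on /=.
  by move: xC; rewrite inE => /negbTE->; rewrite andbF.
by rewrite (eq_hom_rel Y adj_onC) hom_rel0 card_sig.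
Qed.

Lemma hom_induced1 (v : F) (Y : sgraph) : hom (induced [set v]) Y = #|Y|.
Proof.
have adj0 : @ind_adj F [set v] =2 (fun _ _ => false).
  move=> [x xv] [y yv]; rewrite /ind_adj /=.
  by move/set1P: xv => ->; move/set1P: yv => ->; rewrite adj_irr.
by rewrite -hom_rel_adj (eq_hom_rel Y adj0) hom_rel0 card_sig cards1 expn1.
Qed.

Lemma hom_rel_fiber_adj_eq (A : finType) (phi : F -> A) (H H' : sgraph) :
    #|H| = #|H'| -> (forall T : {set F}, hom (induced T) H = hom (induced T) H') ->
  hom_rel (fiber_adj phi) H = hom_rel (fiber_adj phi) H'.
Proof.
move=> eqHH' eqT.
(* R s keeps the fibre edges over the values in s; add one fibre at a time. *)
pose R (s : seq A) x y := fiber_adj phi x y && (phi x \in s).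
suff eqR s : hom_rel (R s) H = hom_rel (R s) H'.
  have RA : fiber_adj phi =2 R (enum A) by move=> x y; rewrite /R mem_enum andbT.
  by rewrite !(eq_hom_rel _ RA).
elim: s => [|a s IHs].
  have R0 : R [::] =2 (fun _ _ => false) by move=> x y; rewrite /R andbF.
  by rewrite !(eq_hom_rel _ R0) !hom_rel0 eqHH'.
pose T := [set x | phi x == a].
have R_cons : R (a :: s) =2 relU (adj_on T) (R s).
  move=> x y; rewrite /R /fiber_adj /adj_on /= !inE.
  case: (adj x y) => //=; case: (phi x =P a) => [->|_] //=.
  by rewrite andbT eq_sym; case: (phi y == a).
have [as_ | a_s] := boolP (a \in s).
  have Rs : R (a :: s) =2 R s.
    by move=> x y; rewrite /R inE; case: eqP => [->|]; rewrite ?as_.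
  by rewrite !(eq_hom_rel _ Rs).
rewrite !(eq_hom_rel _ R_cons); apply: (hom_rel_relU_eq (T := T)) => //.
- by move=> x y /and3P[_ -> ->].
- move=> x y /andP[/andP[_ /eqP exy] xs]; rewrite !inE -exy.
  by apply/andP; split; apply: contraNN a_s => /eqP <-.
- by rewrite !hom_rel_adj_on eqT eqHH'.
Qed.

End InducedSubgraphs.

Definition weak_hom (F G : sgraph) (phi : F -> G) : bool :=
  [forall x, forall y, adj x y ==> (phi x == phi y) || adj (phi x) (phi y)].

Lemma forall2_andb (T : finType) (P Q : T -> T -> bool) :
  [forall x, forall y, P x y && Q x y] =
  [forall x, forall y, P x y] && [forall x, forall y, Q x y].
Proof.
apply/forallP/andP => [PQ | [/forallP P_ /forallP Q_] x].
  by split; apply/forallP => x; apply/forallP => y;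
    have /forallP/(_ y)/andP[] := PQ x.
by apply/forallP => y; rewrite (forallP (P_ x)) (forallP (Q_ x)).
Qed.

Lemma hom_lexprod (F G Y : sgraph) :
  hom F (lexprod G Y) =
  \sum_(phi : {ffun F -> G} | weak_hom phi) hom_rel (fiber_adj phi) Y.
Proof.
rewrite -card_dep_pairs -card_ffun_pair; apply: eq_card => f.
rewrite !inE -forall2_andb; apply: eq_forallb => x; apply: eq_forallb => y.
rewrite /fiber_adj /= /lex_adj !ffunE /=.
by case: (adj x y) => //=; case: eqP => [->|_] /=; rewrite ?eqxx ?adj_irr ?orbF ?andbT.
Qed.

Definition catprod_adj (G X : sgraph) : rel (G * X) :=
  fun u v => adj u.1 v.1 && adj u.2 v.2.
Lemma catprod_adj_sym (G X : sgraph) : symmetric (@catprod_adj G X).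
Proof. by move=> u v; rewrite /catprod_adj adj_sym [adj u.2 _]adj_sym. Qed.
Lemma catprod_adj_irr (G X : sgraph) : irreflexive (@catprod_adj G X).
Proof. by move=> u; rewrite /catprod_adj adj_irr. Qed.
Definition catprod (G X : sgraph) : sgraph :=
  SGraph (@catprod_adj_sym G X) (@catprod_adj_irr G X).

Lemma hom_rel_catprod (V : finType) (R : rel V) (G X : sgraph) :
  hom_rel R (catprod G X) = hom_rel R G * hom_rel R X.
Proof.
rewrite /hom_rel -cardsX -card_ffun_pair; apply: eq_card => f.
rewrite !inE -forall2_andb; apply: eq_forallb => x; apply: eq_forallb => y.
by rewrite !ffunE /catprod_adj /=; case: (R x y).
Qed.

Lemma hom_iso (K1 K2 Y : sgraph) : iso K1 K2 -> hom K1 Y = hom K2 Y.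
Proof.
case=> f [[g fK gK] adjf].
have precomp_inj : injective (fun p : {ffun K2 -> Y} => [ffun x => p (f x)]).
  by move=> p q /ffunP pq; apply/ffunP => y; have := pq (g y); rewrite !ffunE gK.
rewrite /hom -(card_imset _ precomp_inj); apply: eq_card => p; rewrite inE.
apply/idP/imsetP => [/forallP hom_p | [q]].
  exists [ffun y => p (g y)]; last by apply/ffunP => x; rewrite !ffunE fK.
  rewrite inE; apply/forallP => y1; apply/forallP => y2; apply/implyP => a12.
  by rewrite !ffunE; apply: (implyP (forallP (hom_p _) _)); rewrite -adjf !gK.
rewrite inE => /forallP hom_q ->; apply/forallP => x1; apply/forallP => x2.
apply/implyP => a12; rewrite !ffunE.
by apply: (implyP (forallP (hom_q _) _)); rewrite adjf.
Qed.

Lemma hom_lexprod_congr (F G H H' : sgraph) :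
    (forall T : {set F}, hom (induced T) H = hom (induced T) H') ->
  hom F (lexprod G H) = hom F (lexprod G H').
Proof.
move=> eqT; have [F0 | /card_gt0P[v _]] := posnP #|F|.
  by rewrite -!hom_rel_adj !hom_rel_card0.
have eqHH' : #|H| = #|H'| by rewrite -(hom_induced1 v H) -(hom_induced1 v H') eqT.
rewrite !hom_lexprod; apply: eq_bigr => phi _; exact: hom_rel_fiber_adj_eq.
Qed.

Lemma eq_of_sum_mul_eq (I : finType) (g h : I -> nat) :
    \sum_i g i * g i = \sum_i h i * g i -> \sum_i g i * h i = \sum_i h i * h i ->
  g =1 h.
Proof.
move=> sum_g sum_h.
have AGM i : true -> g i * h i + h i * g i <= g i * g i + h i * h i ?= iff (g i == h i).
  move=> _; have [le_AGM eq_AGM] := nat_AGM2 (g i) (h i).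
  split; first by move: le_AGM; rewrite expnS expn1; nia.
  by rewrite -eq_AGM; apply/eqP/eqP; rewrite expnS expn1; nia.
have := (leqif_sum AGM).2; rewrite !big_split /= sum_g sum_h addnC eqxx.
by move=> /esym/forallP eq_gh i; apply/eqP/eq_gh.
Qed.

Definition complete_adj (V : finType) : rel V := fun x y => x != y.
Lemma complete_adj_sym (V : finType) : symmetric (@complete_adj V).
Proof. by move=> x y; rewrite /complete_adj eq_sym. Qed.
Lemma complete_adj_irr (V : finType) : irreflexive (@complete_adj V).
Proof. by move=> x; rewrite /complete_adj eqxx. Qed.
Definition complete_graph (V : finType) : sgraph :=
  SGraph (@complete_adj_sym V) (@complete_adj_irr V).

Lemma weak_hom_complete (F : sgraph) (V : finType) (phi : F -> complete_graph V) :
  weak_hom phi.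
Proof.
by apply/forallP => x; apply/forallP => y; rewrite /= /complete_adj orbN implybT.
Qed.

Lemma hom_lexprod_complete (F Y : sgraph) :
  hom F (lexprod (complete_graph F) Y) =
  \sum_(phi : {ffun F -> complete_graph F}) hom_rel (fiber_adj phi) Y.
Proof. by rewrite hom_lexprod; apply: eq_bigl => phi; rewrite weak_hom_complete. Qed.

Lemma fiber_adj_id (F : sgraph) : fiber_adj [ffun x : F => x] =2 (fun _ _ => false).
Proof.
by move=> x y; rewrite /fiber_adj !ffunE; case: eqP => [->|]; rewrite ?adj_irr ?andbF.
Qed.

Lemma fiber_adj_collapse (F : sgraph) (S : {set F}) (s0 : F) : s0 \in S ->
  fiber_adj [ffun x => if x \in S then s0 else x] =2 adj_on S.
Proof.
move=> s0S x y; rewrite /fiber_adj /adj_on !ffunE.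
have [xS | xNS] := boolP (x \in S); have [yS | yNS] := boolP (y \in S).
- by rewrite eqxx andbT.
- by case: eqP yNS => [<-|]; rewrite ?s0S ?andbF.
- by case: eqP xNS => [->|]; rewrite ?s0S ?andbF.
- by case: eqP => [->|]; rewrite ?adj_irr ?andbF.
Qed.

Lemma catprod_hom_equiv (C : sgraph -> Prop) (G H X : sgraph) :
  hom_equiv C G H -> hom_equiv C (catprod G X) (catprod H X).
Proof. by move=> eqGH F CF; rewrite -!hom_rel_adj !hom_rel_catprod !hom_rel_adj eqGH. Qed.

Lemma hom_rel_fiber_adj_eq_of_cl (C : sgraph -> Prop) (K G H : sgraph) :
    lex_preserved C -> cl C K -> hom_equiv C G H ->
  forall phi : {ffun K -> complete_graph K},
  hom_rel (fiber_adj phi) G = hom_rel (fiber_adj phi) H.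
Proof.
move=> lexC clK eqGH.
pose n (Y : sgraph) (phi : {ffun K -> complete_graph K}) := hom_rel (fiber_adj phi) Y.
have sum_eq (X : sgraph) : \sum_phi n G phi * n X phi = \sum_phi n H phi * n X phi.
  have catE Y : \sum_phi n (catprod Y X) phi = \sum_phi n Y phi * n X phi.
    by apply: eq_bigr => phi _; rewrite /n hom_rel_catprod.
  rewrite -!catE /n -!hom_lexprod_complete.
  by apply: clK; apply: lexC; apply: catprod_hom_equiv.
exact: eq_of_sum_mul_eq (sum_eq G) (sum_eq H).
Qed.

Lemma lex_preserved_cl_induced_closed (C : sgraph -> Prop) :
  lex_preserved C -> induced_closed (cl C).
Proof.
move=> lexC K clK S K' isoK' G H eqGH; rewrite !(hom_iso _ isoK').
have eq_n := hom_rel_fiber_adj_eq_of_cl lexC clK eqGH.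
have [S0 | /card_gt0P[[s0 s0S] _]] := posnP #|induced S|.
  by rewrite -!hom_rel_adj !hom_rel_card0.
have eq_card : #|G| = #|H|.
  have := eq_n [ffun x => x]; rewrite !(eq_hom_rel _ (@fiber_adj_id K)) !hom_rel0.
  by move/eqP; rewrite eqn_exp2r => [/eqP | ] //; apply/card_gt0P; exists s0.
have := eq_n [ffun x => if x \in S then s0 else x].
rewrite !(eq_hom_rel _ (fiber_adj_collapse s0S)) !hom_rel_adj_on eq_card.
have [H0 | H_pos] := posnP #|H|.
  have S_pos : 0 < #|induced S| by apply/card_gt0P; exists (exist _ s0 s0S).
  by rewrite -!hom_rel_adj !hom_rel_eq0 // ?eq_card H0 exp0n.
by move/eqP; rewrite eqn_pmul2r ?expn_gt0 ?H_pos // => /eqP.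
Qed.

Lemma iso_refl (X : sgraph) : iso X X.
Proof. by exists id; split=> //; exists id. Qed.

Lemma mem_cl (C : sgraph -> Prop) (F : sgraph) : C F -> cl C F.
Proof. by move=> CF G H; apply. Qed.

Lemma lex_preserved_of_induced_cl (C : sgraph -> Prop) :
  (forall (F : sgraph) (T : {set F}), C F -> cl C (induced T)) -> lex_preserved C.
Proof.
by move=> clT G H H' eqHH' F CF; apply: hom_lexprod_congr => T; apply: clT.
Qed.

Theorem theorem14 (C : sgraph -> Prop) :
  (induced_closed C -> lex_preserved C) /\
  (lex_preserved C <-> induced_closed (cl C)).
Proof.
split.
  move=> indC; apply: lex_preserved_of_induced_cl => F T CF.
  exact/mem_cl/(indC F CF T _ (iso_refl _)).
split; first exact: lex_preserved_cl_induced_closed.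
move=> indclC; apply: lex_preserved_of_induced_cl => F T CF.
exact: indclC F (mem_cl CF) T _ (iso_refl _).
Qed.
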